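(* Let $\tau_0,\tau_1,\dots,\tau_r$ ($1\le r\le n$) be $\mathbb Z$-linearly independent elements of $G_t$ such that $\tau_0\in G_t\setminus G$ and $\tau_1,\dots,\tau_r\in G$. Then there exists a $\mathbb K$-automorphism $\varphi$ of $\mathbb K(t,\mathbf x)$ such that $\varphi\circ\tau_0=\sigma_t\circ\varphi$ and $\varphi\circ\tau_i=\sigma_{x_i}\circ\varphi$ for all $i=1,\dots,r$. Furthermore, for any $f\in\mathbb K(t,\mathbf x)$, $f$ has a telescoper of type $(\tau_0;\tau_1,\dots,\tau_r)$ if and only if $\varphi(f)$ has a telescoper of type $(\sigma_t;\sigma_{x_1},\dots,\sigma_{x_r})$.
   Context: $\mathbb K$ is a field of characteristic zero, $\mathbf x=(x_1,\dots,x_m)$, $1\le n\le m$; $\sigma_t,\sigma_{x_i}$ are the $\mathbb K$-automorphisms of $\mathbb K(t,\mathbf x)$ shifting $t$, resp. $x_i$, by $1$ and fixing the other variables. $G=\langle\sigma_{x_1},\dots,\sigma_{x_n}\rangle$, $G_t=\langle\sigma_t,\sigma_{x_1},\dots,\sigma_{x_n}\rangle$. Elements are $\mathbb Z$-linearly independent if $\tau_0^{c_0}\cdots\tau_r^{c_r}=\mathbf 1$ with $c_i\in\mathbb Z$ forces all $c_i=0$. For $\tau\in G_t$, $\Delta_\tau(g)=\tau(g)-g$; $g$ is $(\tau_1,\dots,\tau_r)$-summable in $\mathbb K(t,\mathbf x)$ if $g=\sum_{i=1}^r\Delta_{\tau_i}(h_i)$ with $h_i\in\mathbb K(t,\mathbf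 x)$. For $\tau_0\in G_t\setminus G$ (i.e. $\tau_0$ involves a nonzero power of $\sigma_t$), a telescoper of type $(\tau_0;\tau_1,\dots,\tau_r)$ for $f$ is a nonzero operator $L=\sum_{\ell=0}^\rho e_\ell T_0^\ell$ with $e_\ell\in\mathbb K(t)$, where $T_0$ acts as $\tau_0$, such that $L(f):=\sum_\ell e_\ell\tau_0^\ell(f)$ is $(\tau_1,\dots,\tau_r)$-summable in $\mathbb K(t,\mathbf x)$; a telescoper of type $(\sigma_t;\sigma_{x_1},\dots,\sigma_{x_r})$ is the special case $\tau_0=\sigma_t$, $\tau_i=\sigma_{x_i}$. *)

From HB Require Import structures.
From mathcomp Require Import all_boot all_order all_algebra.
From mathcomp Require Import fraction generic_quotient.
From mathcomp Require Import mpoly.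
Set Implicit Arguments. Unset Strict Implicit. Unset Printing Implicit Defensive.
Import GRing.Theory.
Local Open Scope ring_scope.

Notation tofrac := (@FracField.tofrac _).
Notation "x %:F" := (tofrac x) : ring_scope.

(* K(t, x_1, ..., x_m) is the fraction field of K[X_0, ..., X_m]:
   variable X_0 is t and X_i is x_i (1 <= i <= m). *)
Definition RF (K : fieldType) (m : nat) : fieldType := {fraction {mpoly K[m.+1]}}.

Definition shift_mpoly (K : fieldType) (m : nat) (a : 'I_m.+1 -> int)
  (p : {mpoly K[m.+1]}) : {mpoly K[m.+1]} :=
  p \mPo [tuple ('X_i + (a i)%:~R) | i < m.+1].

Definition shiftF (K : fieldType) (m : nat) (a : 'I_m.+1 -> int)
  (f : RF K m) : RF K m :=
  let r := repr f in
  (shift_mpoly a (frac r).1)%:F / (shift_mpoly a (frac r).2)%:F.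

Definition sigma_t (K : fieldType) (m : nat) : RF K m -> RF K m :=
  shiftF (fun k : 'I_m.+1 => ((k == 0%N :> nat) : nat)%:Z).
Definition sigma_x (K : fieldType) (m : nat) (i : nat) : RF K m -> RF K m :=
  shiftF (fun k : 'I_m.+1 => ((k == i :> nat) : nat)%:Z).
Arguments sigma_t {K} m _.
Arguments sigma_x {K} m i _.

(* The element sigma_t^(a 0) sigma_{x_1}^(a 1) ... sigma_{x_n}^(a n) of G_t,
   given by its exponent vector a : 'I_n.+1 -> int (x_{n+1},...,x_m fixed). *)
Definition gelt (K : fieldType) (m n : nat) (a : 'I_n.+1 -> int)
  : RF K m -> RF K m :=
  shiftF (fun k : 'I_m.+1 => if (k <= n)%N then a (inord k) else 0).
Arguments gelt {K} m {n} a _.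

Definition gpow (K : fieldType) (m n : nat) (a : 'I_n.+1 -> int) (c : int)
  : RF K m -> RF K m := gelt m (fun j => c * a j).
Arguments gpow {K} m {n} a c _.

Definition Zlin_indep (K : fieldType) (m n r : nat)
  (v : 'I_r.+1 -> 'I_n.+1 -> int) : Prop :=
  forall c : 'I_r.+1 -> int,
    (forall f : RF K m,
       foldr (fun i g => gpow m (v i) (c i) \o g) id (enum 'I_r.+1) f = f) ->
    forall i, c i = 0.

Definition cstF (K : fieldType) (m : nat) (c : K) : RF K m :=
  (c%:MP : {mpoly K[m.+1]})%:F.
Arguments cstF {K} m c.
Definition polyt (K : fieldType) (m : nat) (P : {poly K}) : {mpoly K[m.+1]} :=
  (map_poly (fun c : K => c%:MP) P).['X_0].
Arguments polyt {K} m P.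
Definition inKt (K : fieldType) (m : nat) (e : RF K m) : Prop :=
  exists P Q : {poly K}, Q != 0 /\ e = (polyt m P)%:F / (polyt m Q)%:F.

Definition summable (K : fieldType) (m r : nat)
  (taus : 'I_r -> RF K m -> RF K m) (g : RF K m) : Prop :=
  exists h : 'I_r -> RF K m, g = \sum_(i < r) (taus i (h i) - h i).

(* L(f) for L = sum_l e_l T0^l, T0 acting as tau0; L given by [:: e_0; ...] *)
Definition applyOp (K : fieldType) (m : nat) (tau0 : RF K m -> RF K m)
  (L : seq (RF K m)) (f : RF K m) : RF K m :=
  \sum_(l < size L) L`_l * iter l tau0 f.

Definition has_telescoper (K : fieldType) (m r : nat)
  (tau0 : RF K m -> RF K m) (taus : 'I_r -> RF K m -> RF K m) (f : RF K m)
  : Prop :=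
  exists L : seq (RF K m),
    (forall e, e \in L -> inKt e) /\ has (fun e => e != 0) L /\
    summable taus (applyOp tau0 L f).

From HB Require Import structures.
From mathcomp Require Import all_boot all_order all_algebra.
From mathcomp Require Import fraction generic_quotient.
From mathcomp Require Import mpoly.
From mathcomp Require Import ring.
Set Implicit Arguments. Unset Strict Implicit. Unset Printing Implicit Defensive.
Import GRing.Theory.
Local Open Scope ring_scope.

(* Every element of [G_t] shifts the variables [X = (t, x_1, ..., x_m)] by an
   integer vector, and the linear change of variables [X |-> M X] conjugates
   the shift by [e] into the shift by [M e].  It thus suffices to find an
   invertible [M] sending the unit vectors [e_0, e_1, ..., e_r] to the
   exponent vectors of [tau_0, tau_1, ..., tau_r].  The vectors of
   [tau_1, ..., tau_r] have no [t]-component and are linearly independent over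
   [Q], hence over [K] since [char K = 0]; so they can be completed to a basis
   of [K^m], and [M] can be taken with first row [(c, 0, ..., 0)], [c != 0].
   Such an [M] maps [K(t)] onto itself ([t |-> c t]), so the induced
   automorphism of [K(t, x)] transports telescopers in both directions. *)

Section FracMap.
Variable R : idomainType.
Implicit Types (p q : R) (f : {fraction R}).

Lemma frac_reprE f : f = (\n_(repr f))%:F / (\d_(repr f))%:F.
Proof.
have hd : (\d_(repr f))%:F != 0 :> {fraction R} by rewrite tofrac_eq0 denom_ratioP.
apply: (mulIf hd); rewrite divfK // -[in LHS](reprK f).
unlock tofrac; rewrite -[X in X = _]/(FracField.mul _ _) !piE reprK.
apply/eqP; rewrite FracField.equivf_def /=.
by rewrite !numden_Ratio ?oner_neq0 ?mulr1 ?mulf_neq0 ?denom_ratioP // mulrC.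
Qed.

Lemma eq_tofrac_div p q p' q' : q != 0 -> q' != 0 ->
  (p%:F / q%:F == p'%:F / q'%:F) = (p * q' == p' * q).
Proof. by move=> hq hq'; rewrite eqr_div ?tofrac_eq0 // -!tofracM tofrac_eq. Qed.

(* Independent of the chosen representative only for an injective ring
   morphism [g], see [frac_map_div]. *)
Definition frac_map (g : R -> R) f : {fraction R} :=
  (g \n_(repr f))%:F / (g \d_(repr f))%:F.

Lemma eq_frac_map (g h : R -> R) : g =1 h -> frac_map g =1 frac_map h.
Proof. by move=> e f; rewrite /frac_map !e. Qed.

Lemma frac_map_id : frac_map id =1 id.
Proof. by move=> f; rewrite /frac_map -frac_reprE. Qed.

Section Injective.
Variable g : {rmorphism R -> R}.
Hypothesis g_inj : injective g.

Lemma frac_map_div p q : frac_map g (p%:F / q%:F) = (g p)%:F / (g q)%:F.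
Proof.
rewrite /frac_map; set f := p%:F / q%:F.
move: (frac_reprE f); set n := \n_(repr f); set d := \d_(repr f) => hf.
have hd : d != 0 by apply: denom_ratioP.
have [q0|hq] := eqVneq q 0.
  move: hf; rewrite /f q0 rmorph0 invr0 mulr0 => /esym/eqP.
  rewrite mulf_eq0 invr_eq0 !tofrac_eq0 (negPf hd) orbF => /eqP->.
  by rewrite !rmorph0 !mul0r invr0 mulr0.
have e : p%:F / q%:F == n%:F / d%:F by rewrite -hf.
rewrite eq_tofrac_div // in e.
by apply/eqP; rewrite eq_tofrac_div ?(raddf_eq0 _ g_inj) // -!rmorphM (eqP e).
Qed.

Lemma frac_map_tofrac p : frac_map g p%:F = (g p)%:F.
Proof. by have := frac_map_div p 1; rewrite !rmorph1 !divr1. Qed.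

Lemma frac_map_is_zmod_morphism : zmod_morphism (frac_map g).
Proof.
move=> x y; rewrite [x]frac_reprE [y]frac_reprE.
set a := \n_(repr x); set b := \d_(repr x); set c := \n_(repr y); set d := \d_(repr y).
have hb : b != 0 by apply: denom_ratioP.
have hd : d != 0 by apply: denom_ratioP.
have subE (u v w z : R) : v != 0 -> z != 0 ->
    u%:F / v%:F - w%:F / z%:F = (u * z - w * v)%:F / (v * z)%:F.
  move=> hv hz; rewrite -mulNr -tofracN addf_div ?tofrac_eq0 //.
  by rewrite -!tofracM -tofracD mulNr.
rewrite subE // !frac_map_div subE ?(raddf_eq0 _ g_inj) //.
by rewrite rmorphB !rmorphM.
Qed.

Lemma frac_map_is_monoid_morphism : monoid_morphism (frac_map g).
Proof.
split; first by rewrite -tofrac1 frac_map_tofrac rmorph1.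
move=> x y; rewrite [x]frac_reprE [y]frac_reprE.
have mulE (u v w z : R) : u%:F / v%:F * (w%:F / z%:F) = (u * w)%:F / (v * z)%:F.
  by rewrite !rmorphM /= invfM mulrACA.
by rewrite mulE !frac_map_div mulE !rmorphM.
Qed.

Definition frac_rmorph : {rmorphism {fraction R} -> {fraction R}} :=
  HB.pack (frac_map g)
    (GRing.isZmodMorphism.Build _ _ (frac_map g) frac_map_is_zmod_morphism)
    (GRing.isMonoidMorphism.Build _ _ (frac_map g) frac_map_is_monoid_morphism).

End Injective.

Lemma frac_map_comp (g h : {rmorphism R -> R}) : injective g ->
  forall f, frac_map g (frac_map h f) = frac_map (g \o h) f.
Proof. by move=> g_inj f; rewrite [frac_map h f]/frac_map frac_map_div. Qed.

End FracMap.

Lemma comp_mpolyA (R : comNzRingType) n (p : {mpoly R[n]})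
    (lq lr : n.-tuple {mpoly R[n]}) :
  (p \mPo lq) \mPo lr = p \mPo [tuple (tnth lq i \mPo lr) | i < n].
Proof.
rewrite [p \mPo lq]comp_mpolyE [p \mPo _]comp_mpolyE.
rewrite (big_morph (comp_mpoly lr) (comp_mpolyD lr) (comp_mpoly0 lr)).
apply: eq_bigr => mm _; rewrite comp_mpolyZ rmorph_prod; congr (_ *: _).
by apply: eq_bigr => i _; rewrite rmorphXn tnth_mktuple.
Qed.

Section AffineSubst.
Variables (K : fieldType) (N : nat).
Implicit Types (M : 'M[K]_N) (b : 'cV[K]_N) (p : {mpoly K[N]}).

Definition affine_subst M b : N.-tuple {mpoly K[N]} :=
  [tuple \sum_(j < N) M i j *: 'X_j + (b i ord0)%:MP | i < N].

Lemma comp_affine_subst M b M' c p :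
  (p \mPo affine_subst M b) \mPo affine_subst M' c =
  p \mPo affine_subst (M *m M') (M *m c + b).
Proof.
rewrite comp_mpolyA; congr (p \mPo _); apply: eq_from_tnth => i.
rewrite !tnth_mktuple raddfD /= comp_mpolyC raddf_sum /=.
under eq_bigr do rewrite comp_mpolyZ comp_mpolyXU -tnth_nth tnth_mktuple.
rewrite [in RHS]mxE [(M *m c) _ _]mxE rmorphD /= addrA; congr (_ + _).
rewrite rmorph_sum /=.
under eq_bigr do rewrite scalerDr scaler_sumr.
rewrite big_split /=; congr (_ + _); last first.
  by apply: eq_bigr => j _; rewrite mpolyCM mul_mpolyC.
rewrite exchange_big /=; apply: eq_bigr => k _.
by rewrite mxE scaler_suml; apply: eq_bigr => j _; rewrite scalerA.
Qed.

Lemma comp_affine_subst1 p : p \mPo affine_subst 1%:M 0 = p.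
Proof.
rewrite -[RHS]comp_mpoly_id; congr (p \mPo _); apply: eq_from_tnth => i.
rewrite !tnth_mktuple mxE addr0 (bigD1 i) //= big1 ?addr0 ?mxE ?eqxx ?scale1r //.
by move=> j /negPf hj; rewrite mxE eq_sym hj scale0r.
Qed.

Lemma affine_subst_inj M b : M \in unitmx ->
  injective (comp_mpoly (affine_subst M b)).
Proof.
move=> hM; apply: (can_inj (g := comp_mpoly (affine_subst (invmx M) (- (invmx M *m b))))).
move=> p /=; rewrite comp_affine_subst mulmxV // mulmxN mulmxA mulmxV // mul1mx.
by rewrite addNr comp_affine_subst1.
Qed.

End AffineSubst.

Section RationalFunctions.
Variables (K : fieldType) (m : nat).
Local Notation N := m.+1.
Local Notation P := {mpoly K[N]}.
Implicit Types (M : 'M[K]_N) (b : 'cV[K]_N) (a e : 'I_N -> int) (f : RF K m).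

Definition affine_morph M b : {rmorphism P -> P} := comp_mpoly (affine_subst M b).

Definition shift_vec a : 'cV[K]_N := \col_i (a i)%:~R.

Lemma shiftFE a : shiftF a =1 frac_map (affine_morph 1%:M (shift_vec a)).
Proof.
move=> f; rewrite /shiftF /frac_map /shift_mpoly /=.
suff -> : [tuple 'X_i + (a i)%:~R | i < N] = affine_subst 1%:M (shift_vec a) by [].
apply: eq_from_tnth => i; rewrite !tnth_mktuple (bigD1 i) //= big1 => [|j hj].
  by rewrite !mxE eqxx scale1r addr0 rmorph_int.
by rewrite mxE eq_sym (negPf hj) scale0r.
Qed.

Lemma frac_map_affine_comp M b M' c f : M' \in unitmx ->
  frac_map (affine_morph M' c) (frac_map (affine_morph M b) f) =
  frac_map (affine_morph (M *m M') (M *m c + b)) f.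
Proof.
move=> hM'; rewrite frac_map_comp; last exact: affine_subst_inj.
by apply: eq_frac_map => p /=; apply: comp_affine_subst.
Qed.

Lemma frac_map_affine1 : frac_map (affine_morph 1%:M 0) =1 id.
Proof.
move=> f; rewrite -[RHS]frac_map_id.
by apply: eq_frac_map => p /=; apply: comp_affine_subst1.
Qed.

Lemma eq_shiftF a e : a =1 e -> @shiftF K m a =1 shiftF e.
Proof.
move=> ae f; rewrite !shiftFE.
by have -> : shift_vec a = shift_vec e by apply/matrixP => i j; rewrite !mxE ae.
Qed.

Lemma shiftF0 : @shiftF K m (fun _ => 0) =1 id.
Proof.
move=> f; rewrite shiftFE -[RHS]frac_map_affine1.
by have -> : shift_vec (fun _ => 0) = 0 by apply/matrixP => i j; rewrite !mxE.
Qed.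

Lemma shiftF_add a e f : shiftF a (shiftF e f) = shiftF (fun i => a i + e i) f.
Proof.
rewrite !shiftFE (frac_map_affine_comp _ _ _ _ (unitmx1 _ _)) !mul1mx.
suff -> : shift_vec a + shift_vec e = shift_vec (fun i => a i + e i) by [].
by apply/matrixP => i j; rewrite !mxE intrD.
Qed.

(* Substituting [M X] into [X + a] gives [M X + a = M (X + e)] when [M e = a]. *)
Lemma frac_map_affine_shiftF M a e f : M \in unitmx -> M *m shift_vec e = shift_vec a ->
  frac_map (affine_morph M 0) (shiftF a f) = shiftF e (frac_map (affine_morph M 0) f).
Proof.
move=> hM hMe; rewrite !shiftFE (frac_map_affine_comp _ _ _ _ hM).
rewrite [RHS](frac_map_affine_comp _ _ _ _ (unitmx1 _ _)).
by rewrite mul1mx mulmx1 mulmx0 add0r addr0 hMe.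
Qed.

Lemma polyt_affine M (Q : {poly K}) : (forall j, j != ord0 -> M ord0 j = 0) ->
  affine_morph M 0 (polyt m Q) = polyt m (Q \Po (M ord0 ord0 *: 'X)).
Proof.
move=> hM; rewrite /polyt -horner_map /= -map_poly_comp.
have -> : affine_morph M 0 'X_0 = M ord0 ord0 *: 'X_0.
  rewrite /= comp_mpolyXU -tnth_nth tnth_mktuple mxE addr0 (bigD1 ord0) //=.
  by rewrite big1 ?addr0 // => j hj; rewrite hM // scale0r.
rewrite map_comp_poly horner_comp; congr (_.[_]).
  by apply: eq_map_poly => c /=; rewrite comp_mpolyC.
by rewrite map_polyZ map_polyX hornerZ hornerX /= mul_mpolyC.
Qed.

(* A change of variables whose first row is [(c, 0, ..., 0)] sends [t] to [c t]. *)
Lemma inKt_frac_map_affine M : M \in unitmx -> M ord0 ord0 != 0 ->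
  (forall j, j != ord0 -> M ord0 j = 0) ->
  forall e : RF K m, inKt e -> inKt (frac_map (affine_morph M 0) e).
Proof.
move=> hM hM00 hM0 _ [Q1 [Q2 [hQ2 ->]]].
rewrite (frac_map_div (affine_subst_inj (b := 0) hM)) !polyt_affine //.
exists (Q1 \Po (M ord0 ord0 *: 'X)), (Q2 \Po (M ord0 ord0 *: 'X)); split => //.
by rewrite -size_poly_eq0 size_comp_poly2 ?size_poly_eq0 // size_scale // size_polyX.
Qed.

Lemma frac_map_affineK M : M \in unitmx ->
  cancel (frac_map (affine_morph M 0)) (frac_map (affine_morph (invmx M) 0)).
Proof.
move=> hM f; rewrite frac_map_affine_comp ?unitmx_inv // mulmxV // mulmx0 addr0.
exact: frac_map_affine1.
Qed.

Lemma frac_map_affineVK M : M \in unitmx ->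
  cancel (frac_map (affine_morph (invmx M) 0)) (frac_map (affine_morph M 0)).
Proof.
move=> hM f; rewrite frac_map_affine_comp // mulVmx // mulmx0 addr0.
exact: frac_map_affine1.
Qed.

Lemma frac_map_affine_conj M a (j : 'I_N) f : M \in unitmx ->
    (forall k, M k j = (a k)%:~R) ->
  frac_map (affine_morph M 0) (shiftF a f) =
  shiftF (fun k : 'I_N => ((k == j :> nat) : nat)%:Z) (frac_map (affine_morph M 0) f).
Proof.
move=> hM hMj; apply: frac_map_affine_shiftF => //; apply/matrixP => k l.
rewrite !mxE (bigD1 j) //= big1 => [|i hi]; first by rewrite !mxE eqxx mulr1 addr0 hMj.
by move: hi; rewrite mxE -val_eqE => /negPf ->; rewrite mulr0.
Qed.

End RationalFunctions.

Section Completion.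
Variable F : fieldType.

Lemma row_free_complete_unitmx r m (B : 'M[F]_(r, m)) (hrm : (r <= m)%N) :
  row_free B -> exists2 g : 'M[F]_m, g \in unitmx &
    forall (i : 'I_r) j, g (widen_ord hrm i) j = B i j.
Proof.
move=> hB.
pose W : 'M[F]_(m, r) := pid_mx r; pose P : 'M[F]_(r, m) := pid_mx r.
pose U : 'M[F]_m := pid_mx r; pose f := W *m B.
have hPW : P *m W = 1%:M by rewrite mul_pid_mx minnn (minn_idPr hrm) pid_mx_1.
have hBf : B = P *m f by rewrite /f mulmxA hPW mul1mx.
have hUf : U *m f = f by rewrite /f mulmxA pid_mx_id.
have hrf : \rank f = r.
  apply/eqP; rewrite eqn_leq (leq_trans (mxrankM_maxr _ _)) ?rank_leq_row //=.
  by rewrite -{1}(eqP hB) {1}hBf mxrankM_maxr.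
have [g hg hfg] : {g : 'M_m | g \in unitmx & U *m f = U *m g}.
  by apply: complete_unitmx; rewrite hUf hrf rank_pid_mx.
exists g => // i j.
have -> : B = P *m g by rewrite hBf -hUf hfg mulmxA pid_mx_id.
by rewrite /P (pid_mxErow _ hrm) -rowsubE mxE.
Qed.

(* [M] is the block matrix [[c 0]; [* g^T]], [g] completing the rows of [B]. *)
Lemma unitmx_with_columns m r (hrm : (r <= m)%N) (c : 'I_m.+1 -> F)
    (B : 'M[F]_(r, m)) : c ord0 != 0 -> row_free B ->
  exists M : 'M[F]_m.+1, [/\ M \in unitmx, forall i, M i ord0 = c i,
     forall j, j != ord0 -> M ord0 j = 0 &
     forall (i : 'I_r) k, M (lift ord0 k) (lift ord0 (widen_ord hrm i)) = B i k].
Proof.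
move=> hc hB; have [g hg hgB] := row_free_complete_unitmx hrm hB.
pose M : 'M[F]_m.+1 := \matrix_(i, j)
  match unlift ord0 j, unlift ord0 i with
  | None, _ => c i
  | Some j', None => 0
  | Some j', Some i' => g j' i'
  end.
have M0 j : j != ord0 -> M ord0 j = 0.
  by rewrite mxE unlift_none; case: (unliftP ord0 j) => [j' _|->]; rewrite ?eqxx.
exists M; split => //; last 2 first.
- by move=> i; rewrite mxE unlift_none.
- by move=> i k; rewrite mxE !liftK hgB.
rewrite unitmxE unitfE (expand_det_row _ ord0) (bigD1 ord0) //= big1 => [|j hj];
  last by rewrite M0 ?mul0r.
rewrite addr0 /cofactor addn0 expr0 mul1r mxE unlift_none mulf_neq0 //.
have -> : row' ord0 (col' ord0 M) = g^T by apply/matrixP => i j; rewrite !mxE !liftK.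
by rewrite det_tr -unitfE -unitmxE.
Qed.

Lemma invmx_row0 m (M : 'M[F]_m.+1) : M \in unitmx ->
    (forall j, j != ord0 -> M ord0 j = 0) ->
  invmx M ord0 ord0 = (M ord0 ord0)^-1 /\
  forall j, j != ord0 -> invmx M ord0 j = 0.
Proof.
move=> hM hM0.
have rowE j : M ord0 ord0 * invmx M ord0 j = (ord0 == j)%:R.
  have := congr1 (fun A : 'M[F]_m.+1 => A ord0 j) (mulmxV hM).
  rewrite !mxE (bigD1 ord0) //= big1 ?addr0 // => k hk.
  by rewrite hM0 ?mul0r.
have hM00 : M ord0 ord0 != 0.
  apply/eqP => h0; have := rowE ord0.
  by rewrite h0 mul0r eqxx => /esym/eqP; rewrite oner_eq0.
split; first by rewrite -[LHS](mulKf hM00) rowE mulr1.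
by move=> j hj; rewrite -[LHS](mulKf hM00) rowE eq_sym (negPf hj) mulr0.
Qed.

End Completion.

Section CharZero.
Variable K : fieldType.
Hypothesis K0 : [pchar K] =i pred0.

Lemma pchar0_intr_eq0 (z : int) : (z%:~R == 0 :> K) = (z == 0).
Proof.
have natr_eq0 := (pcharf0P K).1 K0.
by case: z => n; rewrite ?NegzE ?rmorphN ?oppr_eq0 /= natr_eq0.
Qed.

(* A nonzero maximal minor over [Q] is a nonzero integer, hence nonzero in [K]. *)
Lemma pchar0_row_free_intr r n (Z : 'M[int]_(r, n)) :
  row_free (map_mx intr Z : 'M[rat]_(r, n)) -> row_free (map_mx intr Z : 'M[K]_(r, n)).
Proof.
move=> hZ; have hZt : row_full (map_mx intr Z : 'M[rat]_(r, n))^T.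
  by rewrite /row_full mxrank_tr.
have [s] : exists s : 'I_n ^ r, rowsub s (map_mx intr Z : 'M[rat]_(r, n))^T \in unitmx.
  by exists (fullrankfun hZt); apply: fullrowsub_unit.
rewrite map_trmx -map_mxsub unitmxE unitfE det_map_mx intr_eq0 => hZs.
have hZsK : map_mx (intr : int -> K) (rowsub s Z^T) \in unitmx.
  by rewrite unitmxE unitfE det_map_mx pchar0_intr_eq0.
rewrite /row_free -mxrank_tr eqn_leq rank_leq_col -{1}(mxrank_unit hZsK).
by rewrite map_mxsub -map_trmx mxrankS ?rowsub_sub.
Qed.

End CharZero.

(* Clearing the denominators of a rational kernel vector. *)
Lemma not_row_free_intr r n (Z : 'M[int]_(r, n)) :
  ~~ row_free (map_mx intr Z : 'M[rat]_(r, n)) ->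
  exists2 c : 'I_r -> int, exists i, c i != 0 & forall j, \sum_i c i * Z i j = 0.
Proof.
set A := map_mx _ Z => hA.
have : kermx A != 0 by rewrite kermx_eq0.
case/rowV0Pn => u /submxP [w hw] /rV0Pn [k hk].
have huA : u *m A = 0 by rewrite hw -mulmxA mulmx_ker mulmx0.
pose D := \prod_l denq (u 0 l).
pose c i := numq (u 0 i) * \prod_(l | l != i) denq (u 0 l).
have hc i : (c i)%:~R = (D%:~R : rat) * u 0 i.
  by rewrite /c /D [in RHS](bigD1 i) //= !intrM numqE; ring.
have hD : D != 0 by apply/prodf_neq0 => l _; rewrite denq_neq0.
exists c; first by exists k; rewrite -(intr_eq0 rat) hc mulf_neq0 ?intr_eq0.
move=> j; apply/eqP; rewrite -(intr_eq0 rat) rmorph_sum /=.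
under eq_bigr do rewrite rmorphM /= hc -mulrA.
rewrite -mulr_sumr; have -> : \sum_i u 0 i * (Z i j)%:~R = (u *m A) 0 j.
  by rewrite mxE; apply: eq_bigr => i _; rewrite mxE.
by rewrite huA mxE mulr0.
Qed.

(* [gelt m a] is [shiftF] by this vector, read at [k : 'I_m.+1]. *)
Definition ext_exps n (a : 'I_n.+1 -> int) (k : nat) : int :=
  if (k <= n)%N then a (inord k) else 0.

Lemma ext_exps0 n (a : 'I_n.+1 -> int) : ext_exps a 0 = a ord0.
Proof. by rewrite /ext_exps /= -[X in inord X]/(nat_of_ord (@ord0 n)) inord_val. Qed.

Lemma foldr_gpow (K : fieldType) m n r (v : 'I_r.+1 -> 'I_n.+1 -> int)
    (c : 'I_r.+1 -> int) (s : seq 'I_r.+1) (f : RF K m) :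
  foldr (fun i g => gpow m (v i) (c i) \o g) id s f =
  shiftF (fun k : 'I_m.+1 => \sum_(i <- s) c i * ext_exps (v i) k) f.
Proof.
elim: s f => [|i s IH] f /=.
  by rewrite -[LHS]shiftF0; apply: eq_shiftF => k; rewrite big_nil.
rewrite IH /gpow /gelt shiftF_add; apply: eq_shiftF => k.
by rewrite big_cons /ext_exps; case: ifP; rewrite ?mulr0.
Qed.

Lemma Zlin_indep_row_free (K : fieldType) m n r (v : 'I_r.+1 -> 'I_n.+1 -> int) :
    [pchar K] =i pred0 -> Zlin_indep K m v ->
    (forall i : 'I_r, v (lift ord0 i) ord0 = 0) ->
  row_free (map_mx intr (\matrix_(i < r, k < m) ext_exps (v (lift ord0 i)) k.+1)
            : 'M[K]_(r, m)).
Proof.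
move=> K0 hindep hv0; apply: (pchar0_row_free_intr K0).
apply/negPn/negP => /not_row_free_intr [c [i0 hi0] hc].
pose c' (j : 'I_r.+1) : int := if unlift ord0 j is Some i then c i else 0.
suff /(_ (lift ord0 i0)) : forall j, c' j = 0.
  by rewrite /c' liftK => /eqP; rewrite (negPf hi0).
apply: hindep => f; rewrite foldr_gpow -[RHS]shiftF0; apply: eq_shiftF => k.
rewrite big_enum /= big_ord_recl /c' unlift_none mul0r add0r.
under eq_bigr do rewrite liftK.
case: (unliftP ord0 k) => [k' ->|->].
  by rewrite -[RHS](hc k'); apply: eq_bigr => i _; rewrite mxE.
by rewrite big1 // => i _; rewrite ext_exps0 hv0 mulr0.
Qed.

Lemma iter_conj (T : Type) (phi t s : T -> T) : phi \o t =1 s \o phi ->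
  forall l x, phi (iter l t x) = iter l s (phi x).
Proof. by move=> h; elim=> //= l IH x; rewrite -IH; apply: h. Qed.

Section Telescopers.
Variables (K : fieldType) (m r : nat).
Implicit Types (tau sigma : RF K m -> RF K m) (taus sigmas : 'I_r -> RF K m -> RF K m).

Lemma has_telescoper_rmorph (phi : {rmorphism RF K m -> RF K m}) tau sigma taus sigmas f :
    phi \o tau =1 sigma \o phi -> (forall i, phi \o taus i =1 sigmas i \o phi) ->
    (forall e, inKt e -> inKt (phi e)) ->
  has_telescoper tau taus f -> has_telescoper sigma sigmas (phi f).
Proof.
move=> h0 hi hK [L [hL [hnz [h hs]]]]; exists (map phi L); split; [|split].
- by move=> e /mapP [e' he' ->]; apply/hK/hL.
- by rewrite has_map; apply: sub_has hnz => e /=; rewrite fmorph_eq0.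
exists (fun i => phi (h i)).
have -> : applyOp sigma (map phi L) (phi f) = phi (applyOp tau L f).
  rewrite /applyOp size_map rmorph_sum; apply: eq_bigr => l _.
  by rewrite rmorphM (nth_map 0) ?rmorph0 // (iter_conj h0).
by rewrite hs rmorph_sum; apply: eq_bigr => i _; rewrite rmorphB; congr (_ - _); apply: hi.
Qed.

(* The inverse of a change of variables whose first row is [(c, 0, ..., 0)]
   has first row [(c^-1, 0, ..., 0)], so both directions preserve [K(t)]. *)
Lemma has_telescoper_affine (M : 'M[K]_m.+1) tau sigma taus sigmas f :
    M \in unitmx -> M ord0 ord0 != 0 -> (forall j, j != ord0 -> M ord0 j = 0) ->
    frac_map (affine_morph M 0) \o tau =1 sigma \o frac_map (affine_morph M 0) ->
    (forall i, frac_map (affine_morph M 0) \o taus i =1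
               sigmas i \o frac_map (affine_morph M 0)) ->
  has_telescoper tau taus f <-> has_telescoper sigma sigmas (frac_map (affine_morph M 0) f).
Proof.
move=> hM hM00 hM0 h0 hi.
have hMi : invmx M \in unitmx by rewrite unitmx_inv.
have [hMi00 hMi0] := invmx_row0 hM hM0.
pose phi := frac_rmorph (affine_subst_inj (b := 0) hM).
pose psi := frac_rmorph (affine_subst_inj (b := 0) hMi).
split.
  exact: (has_telescoper_rmorph (phi := phi) h0 hi (inKt_frac_map_affine hM hM00 hM0)).
move=> h; rewrite -(frac_map_affineK hM f).
apply: (has_telescoper_rmorph (phi := psi)) h.
- by move=> g /=; rewrite -{1}(frac_map_affineVK hM g) -[sigma _]h0 /= frac_map_affineK.
- move=> i g /=; rewrite -{1}(frac_map_affineVK hM g).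
  by rewrite -[sigmas i _](hi i) /= frac_map_affineK.
- by apply: inKt_frac_map_affine; rewrite ?hMi00 ?invr_eq0.
Qed.

End Telescopers.

Theorem mainTheorem19 (K : fieldType) (m n r : nat)
  (charK0 : [pchar K] =i pred0)
  (hn1 : (1 <= n)%N) (hnm : (n <= m)%N) (hr1 : (1 <= r)%N) (hrn : (r <= n)%N)
  (v : 'I_r.+1 -> 'I_n.+1 -> int)
  (hindep : Zlin_indep K m v)
  (htau0 : v ord0 ord0 != 0)
  (htaui : forall i : 'I_r, v (lift ord0 i) ord0 = 0) :
  exists phi : {rmorphism RF K m -> RF K m},
    [/\ bijective phi,
        (forall c : K, phi (cstF m c) = cstF m c),
        phi \o gelt m (v ord0) =1 sigma_t m \o phi,
        (forall i : 'I_r,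
           phi \o gelt m (v (lift ord0 i)) =1 sigma_x m i.+1 \o phi) &
        (forall f : RF K m,
           has_telescoper (gelt m (v ord0))
             (fun i : 'I_r => gelt m (v (lift ord0 i))) f <->
           has_telescoper (sigma_t m)
             (fun i : 'I_r => sigma_x m i.+1) (phi f))].
Proof.
have hrm : (r <= m)%N := leq_trans hrn hnm.
have hc0 : (ext_exps (v ord0) 0)%:~R != 0 :> K by rewrite ext_exps0 pchar0_intr_eq0.
have [M [hM hMcol0 hMrow0 hMcol]] := unitmx_with_columns hrm
  (c := fun k : 'I_m.+1 => (ext_exps (v ord0) k)%:~R) hc0
  (Zlin_indep_row_free charK0 hindep htaui).
have hMcoli (i : 'I_r) k :
    M k (lift ord0 (widen_ord hrm i)) = (ext_exps (v (lift ord0 i)) k)%:~R.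
  case: (unliftP ord0 k) => [k' ->|->]; first by rewrite hMcol !mxE.
  by rewrite hMrow0 // ext_exps0 htaui.
have conj0 : frac_map (affine_morph M 0) \o gelt m (v ord0) =1
             sigma_t m \o frac_map (affine_morph M 0).
  by move=> f; apply: (frac_map_affine_conj (j := ord0)).
have conji (i : 'I_r) : frac_map (affine_morph M 0) \o gelt m (v (lift ord0 i)) =1
                        sigma_x m i.+1 \o frac_map (affine_morph M 0).
  by move=> f; apply: (frac_map_affine_conj (j := lift ord0 (widen_ord hrm i))).
exists (frac_rmorph (affine_subst_inj (b := 0) hM)); split => //=.
- by exists (frac_map (affine_morph (invmx M) 0));
    [exact: frac_map_affineK | exact: frac_map_affineVK].
- move=> c; rewrite /cstF (frac_map_tofrac (affine_subst_inj (b := 0) hM)).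
  by rewrite /= comp_mpolyC.
- by move=> f; apply: has_telescoper_affine; rewrite ?hMcol0.
Qed.
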